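(* Let $H=F[1/t]\subseteq\mathbb{Q}[t,1/t]$. Then: (a) $H$ is a Hopf subalgebra of the Hopf algebra $\mathbb{Q}[t,1/t]$ with coproduct $\Delta(t)=t\otimes t$. (b) $H$ is a binomial ring; it is the free binomial ring on a unit.
   Context: $F\subseteq\mathbb{Q}[t]$ is the ring of numerical polynomials (polynomials $f$ with $f(n)\in\mathbb{Z}$ for all integers $n\gg0$), with $\mathbb{Z}$-basis $\binom tn$, $n\ge 0$; $H=F[1/t]$ is its localization at $t$, a subring of $\mathbb{Q}[t,1/t]$. A binomial ring is a subring $R$ of a $\mathbb{Q}$-algebra which is closed under the operations $r\mapsto\binom rn=r(r-1)\cdots(r-n+1)/n!$ for all $n\ge0$. ''Free binomial ring on a unit'' means: for every binomial ring $R$ and every unit $r\in R$ there is a unique ring homomorphism $H\to R$ sending $t$ to $r$. The Hopf algebra structure on $\mathbb{Q}[t,1/t]$ has $\Delta(t)=t\otimes t$, counit $t\mapsto1$ and antipode $t\mapsto t^{-1}$; $F\otimes F$ is identified with the ring of numerical polynomials in $\mathbb{Q}[t_1,t_2]\cong\mathbb{Q}[t]\otimes\mathbb{Q}[t]$. *)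

From HB Require Import structures.
From mathcomp Require Import all_boot all_order all_algebra.
Set Implicit Arguments. Unset Strict Implicit. Unset Printing Implicit Defensive.
Import Order.TTheory GRing.Theory Num.Theory.
Local Open Scope ring_scope.

Definition numerical (p : {poly rat}) : Prop :=
  exists N : nat, forall n : nat, (N <= n)%N -> exists z : int, p.[n%:R] = z%:~R.

(* Evaluation of the Laurent polynomial p(t) * t^(-k) at a unit x of a
   ring L containing Q:   p(x) * x^(-k). *)
Definition lev (L : unitRingType) (x : L) (p : {poly rat}) (k : nat) : L :=
  (map_poly (@ratr L) p).[x] * x ^- k.

(* Ambient field for Q[t,1/t]: Q(t); the variable t. *)
Definition K1 := {fraction {poly rat}}.
Definition T : K1 := tofrac ('X : {poly rat}).

Definition laurent (x : K1) : Prop := exists (p : {poly rat}) (k : nat), x = lev T p k.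

Definition inH (x : K1) : Prop :=
  exists (p : {poly rat}) (k : nat), numerical p /\ x = lev T p k.

(* Ambient field for Q[t,1/t] (x) Q[t,1/t] = Q[t1^(+-1), t2^(+-1)] : Q(t1,t2);
   g (x) h is identified with g(t1) h(t2). *)
Definition K2 := {fraction {poly {poly rat}}}.
Definition t1 : K2 := tofrac (('X : {poly rat})%:P).
Definition t2 : K2 := tofrac ('X : {poly {poly rat}}).

(* The image of H (x)_Z H in Q[t,1/t] (x)_Q Q[t,1/t] (Z-span of the g (x) h,
   g, h in H). *)
Definition inHH (z : K2) : Prop :=
  exists s : seq (({poly rat} * nat) * ({poly rat} * nat)),
    (forall e, e \in s -> numerical e.1.1 /\ numerical e.2.1) /\
    z = \sum_(e <- s) lev t1 e.1.1 e.1.2 * lev t2 e.2.1 e.2.2.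

(* Hopf structure of Q[t,1/t], on an element written p(t) t^(-k):
   Delta(t) = t (x) t, counit t |-> 1, antipode t |-> t^(-1). *)
Definition Delta_rep (p : {poly rat}) (k : nat) : K2 := lev (t1 * t2) p k.
Definition counit_rep (p : {poly rat}) (k : nat) : rat := lev (1 : rat) p k.
Definition antipode_rep (p : {poly rat}) (k : nat) : K1 := lev T^-1 p k.

Definition subring (A : pzRingType) (S : A -> Prop) : Prop :=
  [/\ S 1, (forall x y, S x -> S y -> S (x - y)) & (forall x y, S x -> S y -> S (x * y))].

Definition falling (A : pzRingType) (r : A) (n : nat) : A := \prod_(i < n) (r - i%:R).

Definition binomA (A : comAlgType rat) (r : A) (n : nat) : A :=
  (n`!%:R : rat)^-1 *: falling r n.
Definition binomK1 (r : K1) (n : nat) : K1 := falling r n / n`!%:R.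

Definition binomial_subring (A : comAlgType rat) (R : A -> Prop) : Prop :=
  subring R /\ (forall r n, R r -> R (binomA r n)).

Definition ringhom_H_to (A : comAlgType rat) (R : A -> Prop) (phi : K1 -> A) : Prop :=
  [/\ (forall x, inH x -> R (phi x)), phi 1 = 1,
      (forall x y, inH x -> inH y -> phi (x + y) = phi x + phi y) &
      (forall x y, inH x -> inH y -> phi (x * y) = phi x * phi y)].

(** Every numerical polynomial is an integral combination of the binomial
   polynomials [binom_poly n] (Newton expansion with forward differences), so
   [H] is generated over [Z] by the [binom(t, n) t^-k].  The counit and antipode
   of [binom(t, n)] are [binom(1, n)] and [binom(t^-1, n)], the latter lying in
   [H] because [H] is closed under binomials: [binom(f t^-k, n)] has numerator
   [t^(k n!) prod_i (f - i t^k) / n!], whose values are integers since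
   [n! | b^(n!) prod_(i<n) (a - i b)] for all integers [a, b].  The coproduct of
   [binom(t, n)] is [binom(t1 t2, n)], whose Newton expansion in [t2] has
   numerical coefficients in [t1].  Finally a ring map [H -> R] sending [t] to a
   unit [r] must send [binom(t, n) t^-k] to [binom(r, n) r^-k], which proves
   uniqueness, and this formula is well defined on representatives, which proves
   existence. *)

From HB Require Import structures.
From Stdlib Require Import ClassicalEpsilon.
From mathcomp Require Import all_boot all_order all_algebra.
From mathcomp Require Import ring zify.
Import Order.TTheory GRing.Theory Num.Theory.
Set Implicit Arguments. Unset Strict Implicit. Unset Printing Implicit Defensive.
Local Open Scope ring_scope.

(** * Evaluating Laurent representatives *)

Section LaurentEval.
Variables (L : comNzRingType) (f : {rmorphism rat -> L}) (x s : L).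

(* With [x * s = 1] this is the value at [x] of the Laurent polynomial [p t^-k];
   it is used alike in [Q(t)], [Q(t1, t2)], [Q] and the target algebras. *)
Definition leval (p : {poly rat}) (k : nat) : L := (map_poly f p).[x] * s ^+ k.

Lemma levalM p q k j : leval p k * leval q j = leval (p * q) (k + j).
Proof. by rewrite /leval rmorphM hornerM exprD mulrACA. Qed.

Lemma leval_prod n (F : 'I_n -> {poly rat}) k :
  \prod_(i < n) leval (F i) k = leval (\prod_(i < n) F i) (k * n).
Proof.
elim: n F => [|n IH] F; first by rewrite !big_ord0 muln0 /leval rmorph1 hornerC mulr1.
by rewrite !big_ord_recr /= IH levalM mulnS addnC.
Qed.

Lemma levalC c : leval c%:P 0 = f c.
Proof. by rewrite /leval map_polyC hornerC mulr1. Qed.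

Lemma leval_mulsX p k j : leval p k * s ^+ j = leval p (k + j).
Proof. by rewrite /leval exprD mulrA. Qed.

Lemma levalN p k : - leval p k = leval (- p) k.
Proof. by rewrite /leval rmorphN hornerN mulNr. Qed.

Hypothesis xsK : x * s = 1.

Lemma leval_mulXn p k j : leval (p * 'X^j) (k + j) = leval p k.
Proof.
rewrite /leval rmorphM /= map_polyXn hornerM hornerXn addnC exprD mulrA.
by rewrite -(mulrA _ (x ^+ j)) -exprMn xsK expr1n mulr1.
Qed.

Lemma leval_eq p q k j : p * 'X^j = q * 'X^k -> leval p k = leval q j.
Proof. by move=> E; rewrite -(leval_mulXn p k j) E addnC leval_mulXn. Qed.

Lemma levalD p q k j : leval p k + leval q j = leval (p * 'X^j + q * 'X^k) (k + j).
Proof.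
rewrite -{1}(leval_mulXn p k j) -(leval_mulXn q j k) addnC.
by rewrite /leval -mulrDl -hornerD -rmorphD.
Qed.

Lemma levalB p q k j : leval p k - leval q j = leval (p * 'X^j - q * 'X^k) (k + j).
Proof. by rewrite levalN levalD mulNr. Qed.
End LaurentEval.

Lemma levE (F : fieldType) (f : {rmorphism rat -> F}) (x : F) p k :
  lev x p k = leval f x x^-1 p k.
Proof. by rewrite /lev /leval exprVn -(eq_map_poly (fmorph_eq_rat f)). Qed.

Definition ratK1 := (@tofrac {poly rat}) \o polyC.
Definition ratK2 := (@tofrac {poly {poly rat}}) \o polyC \o polyC.

Lemma T_neq0 : T != 0. Proof. by rewrite tofrac_eq0 polyX_eq0. Qed.

Lemma t1_neq0 : t1 != 0. Proof. by rewrite tofrac_eq0 polyC_eq0 polyX_eq0. Qed.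

Lemma t2_neq0 : t2 != 0. Proof. by rewrite tofrac_eq0 polyX_eq0. Qed.

Lemma map_polyC_hornerX (R : comNzRingType) (p : {poly R}) : (map_poly polyC p).['X] = p.
Proof. by rewrite -[LHS]/(p \Po 'X) comp_polyXr. Qed.

Lemma hornerT p : (map_poly ratK1 p).[T] = tofrac p.
Proof. by rewrite map_poly_comp horner_map map_polyC_hornerX. Qed.

Lemma horner_t1 p : (map_poly ratK2 p).[t1] = tofrac p%:P.
Proof. by rewrite !map_poly_comp horner_map (horner_map polyC) map_polyC_hornerX. Qed.

Lemma horner_t2 p : (map_poly ratK2 p).[t2] = tofrac (map_poly polyC p).
Proof. by rewrite !map_poly_comp horner_map map_polyC_hornerX. Qed.

Lemma horner_t1t2 p :
  (map_poly ratK2 p).[t1 * t2] = tofrac (map_poly polyC p \Po ('X%:P * 'X)).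
Proof. by rewrite !map_poly_comp -rmorphM horner_map. Qed.

Lemma lev_T_inj p q k j : lev T p k = lev T q j -> p * 'X^j = q * 'X^k.
Proof.
rewrite !(levE ratK1) -(leval_mulXn _ _ p k j) -1?(leval_mulXn _ _ q j k) ?mulfV ?T_neq0 //.
rewrite addnC /leval => /mulIf; rewrite expf_eq0 invr_eq0 (negPf T_neq0) andbF.
by move/(_ isT); rewrite !hornerT => /eqP; rewrite tofrac_eq => /eqP.
Qed.

Lemma leval_transfer (L : comNzRingType) (f : {rmorphism rat -> L}) (x s : L) p q k j :
  x * s = 1 -> lev T p k = lev T q j -> leval f x s p k = leval f x s q j.
Proof. by move=> xsK /lev_T_inj; apply: leval_eq. Qed.

(** * Forward differences and the Newton expansion *)

Definition fdiff (R : nzRingType) (p : {poly R}) := p \Po ('X + 1%:P) - p.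

Definition binom_poly (n : nat) : {poly rat} :=
  (n`!%:R)^-1 *: \prod_(i < n) ('X - (i%:R)%:P).

Section ForwardDifference.
Variable R : comNzRingType.
Implicit Types p q : {poly R}.

Lemma horner_fdiff p a : (fdiff p).[a] = p.[a + 1] - p.[a].
Proof. by rewrite /fdiff hornerD hornerN horner_comp hornerD hornerX hornerC. Qed.

Lemma fdiff0 : fdiff (0 : {poly R}) = 0.
Proof. by rewrite /fdiff comp_poly0 subrr. Qed.

Lemma fdiffD p q : fdiff (p + q) = fdiff p + fdiff q.
Proof. rewrite /fdiff comp_polyD; ring. Qed.

Lemma fdiffB p q : fdiff (p - q) = fdiff p - fdiff q.
Proof. rewrite /fdiff comp_polyB; ring. Qed.

Lemma fdiffCM c p : fdiff (c%:P * p) = c%:P * fdiff p.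
Proof. by rewrite /fdiff comp_polyM comp_polyC mulrBr. Qed.

Lemma map_fdiff (S : comNzRingType) (g : {rmorphism R -> S}) p :
  map_poly g (fdiff p) = fdiff (map_poly g p).
Proof. by rewrite /fdiff rmorphB /= map_comp_poly map_polyXaddC rmorph1. Qed.

Lemma map_iter_fdiff (S : comNzRingType) (g : {rmorphism R -> S}) b p :
  map_poly g (iter b (@fdiff R) p) = iter b (@fdiff S) (map_poly g p).
Proof. by elim: b => //= b IH; rewrite map_fdiff IH. Qed.
End ForwardDifference.

Lemma prod_nat_sub (R : comNzRingType) (m n : nat) :
  \prod_(i < n) ((m%:R : R) - i%:R) = (m ^_ n)%:R.
Proof.
elim: n => [|n IH]; first by rewrite big_ord0 ffactn0.
rewrite big_ord_recr /= IH ffactnSr natrM.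
by have [le_nm|lt_mn] := leqP n m; [rewrite natrB | rewrite ffact_small // !mul0r].
Qed.

Lemma binom_poly_nat (m n : nat) : (binom_poly n).[m%:R] = 'C(m, n)%:R.
Proof.
rewrite /binom_poly hornerZ horner_prod.
under eq_bigr do rewrite hornerXsubC.
rewrite prod_nat_sub -bin_ffact natrM mulrC -mulrA mulfV ?mulr1 //.
by rewrite pnatr_eq0 -lt0n fact_gt0.
Qed.

Lemma binom_poly0 : binom_poly 0 = 1.
Proof. by rewrite /binom_poly big_ord0 invr1 scale1r. Qed.

Section CharZero.
Variables (R : idomainType) (f : {rmorphism rat -> R}).
Implicit Types p : {poly R}.

Lemma poly_nat_roots_eq0 p : (forall m : nat, p.[m%:R] = 0) -> p = 0.
Proof.
move=> p_nat0; apply/eqP; apply: contraT => p_neq0.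
have nat_inj : injective (fun m : nat => (m%:R : R)).
  move=> m n /= mn; apply/eqP; rewrite -(eqr_nat rat); apply/eqP.
  by apply: (fmorph_inj f); rewrite !rmorph_nat.
have := @max_poly_roots _ p [seq i%:R | i <- iota 0 (size p)] p_neq0.
rewrite size_map size_iota ltnn; apply; last by rewrite map_inj_uniq ?iota_uniq.
by apply/allP => _ /mapP [i _ ->]; rewrite /root p_nat0.
Qed.

Lemma size_fdiff p : (size (fdiff p) <= (size p).-1)%N.
Proof.
have [/size1_polyC ->|p_gt1] := leqP (size p) 1.
  by rewrite /fdiff comp_polyC subrr size_poly0.
have size_shift : size (p \Po ('X + 1%:P)) = size p.
  by rewrite size_comp_poly2 // size_XaddC.
have lead_shift : lead_coef (p \Po ('X + 1%:P)) = lead_coef p.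
  by rewrite lead_coef_comp ?size_XaddC // lead_coefXaddC expr1n mulr1.
apply/leq_sizeP => j j_ge; rewrite coefB.
have [->|j_neq] := eqVneq j (size p).-1.
  by rewrite -{1}size_shift -!lead_coefE lead_shift subrr.
have le_pj : (size p <= j)%N by move: j_ge j_neq p_gt1; case: (size p) => // n /=; lia.
by rewrite !nth_default ?subrr ?size_shift.
Qed.

Lemma fdiff_eq0 p : fdiff p = 0 -> p = (p.[0])%:P.
Proof.
move=> dp0; have p_const (m : nat) : p.[m%:R] = p.[0].
  elim: m => // m <-; have /eqP := congr1 (horner^~ m%:R) dp0.
  by rewrite horner_fdiff horner0 subr_eq0 -natr1 => /eqP.
apply/eqP; rewrite -subr_eq0; apply/eqP/poly_nat_roots_eq0 => m.
by rewrite hornerD hornerN hornerC p_const subrr.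
Qed.
End CharZero.

Lemma fdiff_binom_poly n : fdiff (binom_poly n.+1) = binom_poly n.
Proof.
apply/eqP; rewrite -subr_eq0; apply/eqP; apply: (poly_nat_roots_eq0 idfun) => m.
rewrite hornerD hornerN horner_fdiff natr1 !binom_poly_nat binS natrD; ring.
Qed.

Section Newton.
Variables (R : idomainType) (f : {rmorphism rat -> R}).
Implicit Types p : {poly R}.

Definition binom_polyR b := map_poly f (binom_poly b).

Lemma newton_expansion d p : (size p <= d)%N ->
  p = \sum_(b < d) ((iter b (@fdiff R) p).[0])%:P * binom_polyR b.
Proof.
elim: d p => [|d IH] p size_p.
  by rewrite big_ord0; apply/eqP; rewrite -size_poly_eq0 -leqn0.
have size_dp : (size (fdiff p) <= d)%N.
  by apply: leq_trans (size_fdiff p) _; move: size_p; case: (size p).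
set g := \sum_(b < d) ((iter b.+1 (@fdiff R) p).[0])%:P * binom_polyR b.+1.
have dg : fdiff g = fdiff p.
  rewrite [RHS](IH _ size_dp) /g (big_morph _ (@fdiffD R) (@fdiff0 R)).
  apply: eq_bigr => b _.
  by rewrite fdiffCM /binom_polyR -map_fdiff fdiff_binom_poly iterSr.
have g0 : g.[0] = 0.
  rewrite /g horner_sum big1 // => b _; rewrite hornerM hornerC.
  by rewrite /binom_polyR -(rmorph0 f) horner_map (binom_poly_nat 0) bin0n rmorph0 mulr0.
have /(fdiff_eq0 f) p_g : fdiff (p - g) = 0 by rewrite fdiffB dg subrr.
rewrite big_ord_recl /= /binom_polyR binom_poly0 rmorph1 mulr1 -/g.
by rewrite -[LHS](subrK g) p_g hornerD hornerN g0 subr0.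
Qed.
End Newton.

(** * Numerical polynomials *)

Definition int_valued (p : {poly rat}) := forall m : nat, p.[m%:R] \is a Num.int.

Lemma numericalP p : numerical p <-> exists N, forall n, (N <= n)%N -> p.[n%:R] \is a Num.int.
Proof.
split=> -[N pN]; exists N => n /pN; last by move/intrP.
by move=> [z ->]; rewrite rpred_int.
Qed.

Lemma int_valued_fdiff p : int_valued p -> int_valued (fdiff p).
Proof. by move=> p_int m; rewrite horner_fdiff natr1 rpredB. Qed.

Lemma int_valued_iter_fdiff b p : int_valued p -> int_valued (iter b (@fdiff _) p).
Proof. by move=> p_int; elim: b => //= b; apply: int_valued_fdiff. Qed.

Inductive binom_span : {poly rat} -> Prop :=
| binom_span_binom b : binom_span (binom_poly b)
| binom_span_sub p q : binom_span p -> binom_span q -> binom_span (p - q).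

Lemma binom_span0 : binom_span 0.
Proof. by rewrite -(subrr (binom_poly 0)); do !constructor. Qed.

Lemma binom_spanN p : binom_span p -> binom_span (- p).
Proof. by rewrite -sub0r; constructor=> //; apply: binom_span0. Qed.

Lemma binom_spanD p q : binom_span p -> binom_span q -> binom_span (p + q).
Proof. by move=> sp sq; rewrite -[q]opprK; constructor=> //; apply: binom_spanN. Qed.

Lemma binom_span_sum d (F : 'I_d -> {poly rat}) :
  (forall i, binom_span (F i)) -> binom_span (\sum_(i < d) F i).
Proof. by move=> sF; elim/big_ind: _ => //; [apply: binom_span0 | apply: binom_spanD]. Qed.

Lemma binom_spanMz p z : binom_span p -> binom_span (p *~ z).
Proof.
have spanMn n : binom_span p -> binom_span (p *+ n).
  move=> sp; elim: n => [|n]; first by rewrite mulr0n; apply: binom_span0.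
  by rewrite mulrS; apply: binom_spanD.
by case: z => n sp; [apply: spanMn | rewrite NegzE mulrNz; apply/binom_spanN/spanMn].
Qed.

Lemma binom_span_int_valued p : binom_span p -> int_valued p.
Proof.
elim=> [b m|{}p q _ sp _ sq m]; first by rewrite binom_poly_nat rpred_nat.
by rewrite hornerD hornerN rpredB.
Qed.

Lemma int_valued_binom_span p : int_valued p -> binom_span p.
Proof.
move=> p_int; rewrite (newton_expansion idfun (leqnn (size p))).
apply: binom_span_sum => b; have /intrP[z ->] := int_valued_iter_fdiff b p_int 0.
rewrite /binom_polyR map_poly_id // mul_polyC scaler_int.
exact/binom_spanMz/binom_span_binom.
Qed.

Lemma comp_XaddC_subC (c : rat) : ('X + c%:P) \Po ('X - c%:P) = 'X.
Proof. by rewrite comp_polyD comp_polyX comp_polyC subrK. Qed.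

Lemma binom_span_comp_subX1 p : binom_span p -> binom_span (p \Po ('X - 1%:P)).
Proof.
elim=> [b|{}p q _ sp _ sq]; last by rewrite comp_polyB; constructor.
elim: b => [|b IH].
  by rewrite binom_poly0 -polyC1 comp_polyC polyC1 -binom_poly0; constructor.
have -> : binom_poly b.+1 \Po ('X - 1%:P) = binom_poly b.+1 - (binom_poly b \Po ('X - 1%:P)).
  rewrite -(fdiff_binom_poly b) /fdiff comp_polyB -comp_polyA comp_XaddC_subC comp_polyXr.
  ring.
by apply: binom_span_sub => //; constructor.
Qed.

Lemma binom_span_comp_subXn p (N : nat) : binom_span p -> binom_span (p \Po ('X - N%:R%:P)).
Proof.
move=> sp; elim: N => [|N IH]; first by rewrite subr0 comp_polyXr.
have -> : p \Po ('X - N.+1%:R%:P) = (p \Po ('X - N%:R%:P)) \Po ('X - 1%:P).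
  rewrite -comp_polyA comp_polyB comp_polyX comp_polyC -natr1 polyCD.
  by congr (_ \Po _); ring.
exact: binom_span_comp_subX1.
Qed.

Lemma numerical_binom_spanP p : numerical p <-> binom_span p.
Proof.
split=> [/numericalP [N pN]|/binom_span_int_valued p_int]; last first.
  by apply/numericalP; exists 0%N => n _.
have shifted_int : int_valued (p \Po ('X + N%:R%:P)).
  by move=> m; rewrite horner_comp hornerD hornerX hornerC -natrD pN // leq_addl.
rewrite -[p]comp_polyXr -(comp_XaddC_subC N%:R) comp_polyA.
exact/binom_span_comp_subXn/int_valued_binom_span.
Qed.

Lemma numericalB p q : numerical p -> numerical q -> numerical (p - q).
Proof.
move=> /numerical_binom_spanP sp /numerical_binom_spanP sq.
by apply/numerical_binom_spanP; constructor.
Qed.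

Lemma numericalD p q : numerical p -> numerical q -> numerical (p + q).
Proof.
move=> /numerical_binom_spanP sp /numerical_binom_spanP sq.
exact/numerical_binom_spanP/binom_spanD.
Qed.

Lemma numericalN p : numerical p -> numerical (- p).
Proof. by move/numerical_binom_spanP/binom_spanN/numerical_binom_spanP. Qed.

Lemma numericalM p q : numerical p -> numerical q -> numerical (p * q).
Proof.
move=> /numericalP [N1 pN1] /numericalP [N2 qN2]; apply/numericalP.
exists (maxn N1 N2) => n; rewrite geq_max => /andP [le1 le2].
by rewrite hornerM rpredM ?pN1 ?qN2.
Qed.

Lemma numerical1 : numerical 1.
Proof. by rewrite -binom_poly0; apply/numerical_binom_spanP; constructor. Qed.

Lemma numericalX : numerical 'X.
Proof. by apply/numericalP; exists 0%N => n _; rewrite hornerX rpred_nat. Qed.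

Lemma numericalXn j : numerical 'X^j.
Proof.
elim: j => [|j IH]; first by rewrite expr0; apply: numerical1.
by rewrite exprS; apply: numericalM IH; apply: numericalX.
Qed.

(** * A divisibility of factorials *)

Lemma dvdz_prod_addMr (d : int) n (x y : nat -> int) :
  (d %| \prod_(i < n) (x i + d * y i) - \prod_(i < n) x i)%Z.
Proof.
elim: n => [|n IH]; first by rewrite !big_ord0 subrr dvdz0.
rewrite !big_ord_recr /=.
set P := \prod_(i < n) (_ + _); set Q := \prod_(i < n) x i.
have -> : P * (x n + d * y n) - Q * x n = (P - Q) * (x n + d * y n) + d * (Q * y n) by ring.
by rewrite rpredD ?dvdz_mulr ?dvdzz.
Qed.

Lemma dvdz_fact_ffact (c n : nat) : (n`!%:Z %| \prod_(i < n) (c%:Z - i%:Z))%Z.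
Proof.
rewrite (eq_bigr (fun i : 'I_n => c%:R - i%:R)) => [|i _]; last by rewrite !natz.
by rewrite prod_nat_sub natz -bin_ffact PoszM dvdz_mull.
Qed.

Lemma coprime_solve_mod (a : int) (b q : nat) : (0 < q)%N -> coprime q b ->
  exists c : nat, (q%:Z %| a - (b * c)%:Z)%Z.
Proof.
move=> q_gt0 cop; have [u [v uv]] := Bezoutz b q.
have {}uv : u * b%:Z + v * q%:Z = 1.
  by rewrite uv; apply/eqP; rewrite -[_ == 1]/(coprimez _ _) coprimezE coprime_sym.
set D := ((u * a) %/ q)%Z; set c0 := ((u * a) %% q)%Z.
have c0E : c0 = u * a - D * q%:Z by rewrite [u * a](divz_eq _ q) addrAC subrr add0r.
have c0_ge0 : 0 <= c0 by rewrite modz_ge0 // eqz_nat -lt0n.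
exists `|c0|%N; rewrite PoszM gez0_abs // c0E.
suff -> : a - b%:Z * (u * a - D * q%:Z) = q%:Z * (v * a + b%:Z * D) by rewrite dvdz_mulr.
by rewrite -[a in a - _]mulr1 -uv; ring.
Qed.

Lemma dvdz_prod_arith_coprime (a : int) (b n q : nat) : coprime q b -> (q %| n`!)%N ->
  (q%:Z %| \prod_(i < n) (a - (i * b)%:Z))%Z.
Proof.
move=> cop q_dvd; have q_gt0 := dvdn_gt0 (fact_gt0 n) q_dvd.
have [c /dvdzP [k ak]] := coprime_solve_mod a q_gt0 cop.
have -> : \prod_(i < n) (a - (i * b)%:Z)
          = \prod_(i < n) (b%:Z * (c%:Z - i%:Z) + q%:Z * k).
  apply: eq_bigr => i _; rewrite -[a](subrK (b * c)%:Z) ak !PoszM; ring.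
rewrite -(subrK (\prod_(i < n) (b%:Z * (c%:Z - i%:Z))) (\prod_(i < n) _)).
rewrite rpredD //; first exact: (dvdz_prod_addMr _ _ (fun i => b%:Z * (c%:Z - i%:Z)) (fun=> k)).
rewrite big_split /= dvdz_mull //.
by apply: dvdz_trans (dvdz_fact_ffact c n); rewrite dvdzE.
Qed.

(* Prime by prime: if [p | b] then [b^(n!)] absorbs the [p]-part of [n!],
   otherwise [b] is invertible modulo it. *)
Lemma dvdz_fact_prod_arith (a : int) (b n : nat) :
  (n`!%:Z %| (b ^ n`!)%:Z * \prod_(i < n) (a - (i * b)%:Z))%Z.
Proof.
rewrite dvdzE abszM /=; apply/(dvdn_partP _ (fact_gt0 n)) => p.
rewrite mem_primes => /and3P [p_pr _ _].
have [p_dvd_b|p_ndvd_b] := boolP (p %| b)%N.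
  apply: dvdn_mulr; rewrite p_part; apply: dvdn_trans (dvdn_exp2r _ p_dvd_b).
  apply: dvdn_exp2l; apply: ltnW (leq_trans (ltn_expl _ (prime_gt1 p_pr)) _).
  by have := dvdn_leq (fact_gt0 n) (dvdn_part p n`!); rewrite p_part.
apply: dvdn_mull; rewrite -[X in (X %| _)%N]/`|(n`!`_p)%:Z|%N -dvdzE.
apply: dvdz_prod_arith_coprime (dvdn_part p n`!).
by rewrite p_part coprimeXl // prime_coprime.
Qed.

(** * The ring H *)

Lemma mulTV : T * T^-1 = 1. Proof. exact: mulfV T_neq0. Qed.

Lemma levTM p q k j : lev T p k * lev T q j = lev T (p * q) (k + j).
Proof. by rewrite !(levE ratK1) levalM. Qed.

Lemma levTB p q k j : lev T p k - lev T q j = lev T (p * 'X^j - q * 'X^k) (k + j).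
Proof. by rewrite !(levE ratK1) levalB // mulTV. Qed.

Lemma levTD p q k j : lev T p k + lev T q j = lev T (p * 'X^j + q * 'X^k) (k + j).
Proof. by rewrite !(levE ratK1) levalD // mulTV. Qed.

Lemma levT0 p : lev T p 0 = tofrac p.
Proof. by rewrite (levE ratK1) /leval hornerT mulr1. Qed.

Lemma levT1 : lev T 1 0 = 1.
Proof. by rewrite levT0 rmorph1. Qed.

Lemma levTX : lev T 'X 0 = T.
Proof. exact: levT0. Qed.

Lemma inH_lev p k : numerical p -> inH (lev T p k).
Proof. by move=> np; exists p, k. Qed.

Lemma inH1 : inH 1.
Proof. by rewrite -levT1; apply/inH_lev/numerical1. Qed.

Lemma inHT : inH T.
Proof. by rewrite -levTX; apply/inH_lev/numericalX. Qed.

Lemma inHTV : inH T^-1.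
Proof.
suff -> : T^-1 = lev T 1 1 by apply/inH_lev/numerical1.
by rewrite (levE ratK1) /leval rmorph1 hornerC mul1r.
Qed.

Lemma inHB x y : inH x -> inH y -> inH (x - y).
Proof.
move=> [p [k [np ->]]] [q [j [nq ->]]]; rewrite levTB.
by apply/inH_lev/numericalB; apply: numericalM => //; apply: numericalXn.
Qed.

Lemma inHM x y : inH x -> inH y -> inH (x * y).
Proof. by move=> [p [k [np ->]]] [q [j [nq ->]]]; rewrite levTM; apply/inH_lev/numericalM. Qed.

Lemma subring_inH : subring inH.
Proof. by split; [apply: inH1 | apply: inHB | apply: inHM]. Qed.

Lemma inH0 : inH 0.
Proof. by rewrite -(subrr 1); apply: inHB inH1 inH1. Qed.

Lemma inHD x y : inH x -> inH y -> inH (x + y).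
Proof. by move=> hx hy; rewrite -[y]opprK -[- y]sub0r; apply/inHB/inHB/hy/inH0. Qed.

Lemma inHX x j : inH x -> inH (x ^+ j).
Proof.
by move=> hx; elim: j => [|j IH]; [rewrite expr0; apply: inH1 | rewrite exprS; apply: inHM].
Qed.

Lemma inH_nat n : inH n%:R.
Proof. by elim: n => [|n IH]; [apply: inH0 | rewrite -natr1; apply: inHD IH inH1]. Qed.

Lemma inH_falling x n : inH x -> inH (falling x n).
Proof.
move=> hx; elim: n => [|n IH]; first by rewrite /falling big_ord0; apply: inH1.
by rewrite /falling big_ord_recr /=; apply: inHM IH _; apply: inHB hx (inH_nat n).
Qed.

(* Numerator of [binom(p t^-k, n)]; the factor [X^(k n!)] is what makes it
   numerical, by [dvdz_fact_prod_arith]. *)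
Definition binom_laurent_numer (p : {poly rat}) (k n : nat) : {poly rat} :=
  (n`!%:R)^-1 *: \prod_(i < n) (p - (i%:R)%:P * 'X^k) * 'X^(k * n`!).

Lemma binomK1_lev p k n :
  binomK1 (lev T p k) n = lev T (binom_laurent_numer p k n) (k * n + k * n`!).
Proof.
rewrite /binomK1 /falling !(levE ratK1) /binom_laurent_numer leval_mulXn ?mulTV //.
rewrite -mul_polyC -[(k * n)%N]add0n -levalM levalC fmorphV rmorph_nat -leval_prod mulrC.
congr (_ * _); apply: eq_bigr => i _.
have -> : (i%:R : K1) = leval ratK1 T T^-1 (i%:R)%:P 0 by rewrite levalC rmorph_nat.
by rewrite levalB ?mulTV // expr0 mulr1 addn0.
Qed.

Lemma numerical_binom_laurent_numer p k n :
  numerical p -> numerical (binom_laurent_numer p k n).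
Proof.
move=> /numericalP [N pN]; apply/numericalP; exists N => m /pN /intrP [a pm].
set b := (m ^ k)%N; have /dvdzP [z Ez] := dvdz_fact_prod_arith a b n.
suff -> : (binom_laurent_numer p k n).[m%:R] = z%:~R by rewrite rpred_int.
have nfact_neq0 : (n`!%:R : rat) != 0 by rewrite pnatr_eq0 -lt0n fact_gt0.
apply: (mulfI nfact_neq0).
have -> : n`!%:R * z%:~R = (z * n`!)%:~R :> rat by rewrite intrM mulrC.
rewrite -Ez /binom_laurent_numer hornerM hornerZ hornerXn mulrA mulVKf // intrM rmorph_prod.
rewrite horner_prod mulrC; congr (_ * _); first by rewrite -pmulrn /b -expnM natrX.
apply: eq_bigr => i _; rewrite hornerD hornerN hornerM hornerC hornerXn pm.
by rewrite rmorphB /= PoszM intrM -!pmulrn /b natrX.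
Qed.

Lemma inH_binom r n : inH r -> inH (binomK1 r n).
Proof.
move=> [p [k [np ->]]]; rewrite binomK1_lev.
exact/inH_lev/numerical_binom_laurent_numer.
Qed.

(** * The Hopf structure *)

Lemma horner_binom_poly (L : comNzRingType) (f : {rmorphism rat -> L}) (x : L) b :
  (map_poly f (binom_poly b)).[x] = f (b`!%:R)^-1 * falling x b.
Proof.
rewrite /binom_poly -mul_polyC rmorphM /= map_polyC hornerM hornerC rmorph_prod.
rewrite horner_prod; congr (_ * _); apply: eq_bigr => i _.
by rewrite /= map_polyXsubC hornerXsubC rmorph_nat.
Qed.

Lemma horner_binom_poly_K1 (x : K1) b : (map_poly ratK1 (binom_poly b)).[x] = binomK1 x b.
Proof. by rewrite horner_binom_poly fmorphV rmorph_nat mulrC. Qed.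

Lemma inH_horner x q : inH x -> binom_span q -> inH ((map_poly ratK1 q).[x]).
Proof.
move=> hx; elim=> [b|p {}q _ hp _ hq]; first by rewrite horner_binom_poly_K1; apply: inH_binom.
by rewrite rmorphB hornerD hornerN; apply: inHB.
Qed.

Lemma inH_laurent x : inH x -> laurent x.
Proof. by move=> [p [k [_ ->]]]; exists p, k. Qed.

Lemma counit_int x : inH x -> forall p k, x = lev T p k ->
  exists z : int, counit_rep p k = z%:~R.
Proof.
move=> [q [j [nq ->]]] p k Ex.
rewrite /counit_rep (levE idfun) invr1 (leval_transfer _ (mulr1 1) (esym Ex)).
have /numerical_binom_spanP/binom_span_int_valued/(_ 1)/intrP[z qz] := nq.
by exists z; rewrite /leval expr1n mulr1 map_poly_id.
Qed.

Lemma antipode_inH x : inH x -> forall p k, x = lev T p k -> inH (antipode_rep p k).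
Proof.
move=> [q [j [nq ->]]] p k Ex.
rewrite /antipode_rep (levE ratK1) invrK.
rewrite (leval_transfer _ (mulVf T_neq0) (esym Ex)) /leval.
by apply: inHM; [apply: inH_horner inHTV _; apply/numerical_binom_spanP | apply: inHX inHT].
Qed.

Lemma inHH0 : inHH 0.
Proof. by exists [::]; rewrite big_nil. Qed.

Lemma inHHD z w : inHH z -> inHH w -> inHH (z + w).
Proof.
move=> [s [hs ->]] [s' [hs' ->]]; exists (s ++ s'); rewrite big_cat; split=> // e.
by rewrite mem_cat => /orP [/hs|/hs'].
Qed.

Lemma inHHN z : inHH z -> inHH (- z).
Proof.
move=> [s [hs ->]]; exists [seq ((- e.1.1, e.1.2), e.2) | e <- s]; split.
  by move=> _ /mapP [e /hs [ng nh] ->]; split=> //; apply: numericalN.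
rewrite big_map -sumrN; apply: eq_bigr => e _ /=.
by rewrite !(levE ratK2) -levalN mulNr.
Qed.

Lemma inHHB z w : inHH z -> inHH w -> inHH (z - w).
Proof. by move=> hz hw; apply/inHHD/inHHN. Qed.

Lemma inHH_sum d (F : 'I_d -> K2) : (forall i, inHH (F i)) -> inHH (\sum_(i < d) F i).
Proof. by move=> hF; elim/big_ind: _ => //; [apply: inHH0 | apply: inHHD]. Qed.

Lemma inHH_mulVX z j : inHH z -> inHH (z * (t1 * t2)^-1 ^+ j).
Proof.
move=> [s [hs ->]].
exists [seq ((e.1.1, (e.1.2 + j)%N), (e.2.1, (e.2.2 + j)%N)) | e <- s]; split.
  by move=> _ /mapP [e /hs he ->].
rewrite big_map mulr_suml; apply: eq_bigr => e _ /=.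
by rewrite invfM exprMn mulrACA !(levE ratK2) !leval_mulsX.
Qed.

Lemma inHH_tensor g h : numerical g -> numerical h ->
  inHH (tofrac g%:P * tofrac (map_poly polyC h)).
Proof.
move=> ng nh; exists [:: ((g, 0%N), (h, 0%N))].
split; first by move=> e; rewrite inE => /eqP ->.
by rewrite big_seq1 /= !(levE ratK2) /leval !expr0 !mulr1 horner_t1 horner_t2.
Qed.

(* Coefficients of the Newton expansion of [binom(t1 t2, n)] in [t2]:
   specialising [t1 := m] gives the forward differences of [binom(m X, n)]. *)
Lemma numerical_newton_coef n b :
  numerical ((iter b (@fdiff _) (map_poly polyC (binom_poly n) \Po ('X%:P * 'X))).[0]).
Proof.
apply/numericalP; exists 0%N => m _.
rewrite -[_.[m%:R]]/(horner_eval m%:R _) -(horner_map (horner_eval (m%:R : rat))) rmorph0.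
rewrite map_iter_fdiff map_comp_poly.
rewrite -map_poly_comp map_poly_id => [|c _]; last by rewrite /= horner_evalE hornerC.
have -> : map_poly (horner_eval (m%:R : rat)) ('X%:P * 'X) = (m%:R)%:P * 'X.
  by rewrite rmorphM /= map_polyC map_polyX /= horner_evalE hornerX.
suff /(int_valued_iter_fdiff b) : int_valued (binom_poly n \Po ((m%:R)%:P * 'X)).
  by move/(_ 0%N).
by move=> y; rewrite horner_comp hornerM hornerC hornerX -natrM binom_poly_nat rpred_nat.
Qed.

Lemma inHH_binom_poly_t1t2 n : inHH ((map_poly ratK2 (binom_poly n)).[t1 * t2]).
Proof.
rewrite horner_t1t2; set G := _ \Po _.
rewrite (newton_expansion polyC (leqnn (size G))) rmorph_sum; apply: inHH_sum => b.
rewrite (rmorphM (@tofrac _)) /binom_polyR.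
apply: inHH_tensor (numerical_newton_coef n b) _.
exact/numerical_binom_spanP/binom_span_binom.
Qed.

Lemma inHH_horner_t1t2 q : binom_span q -> inHH ((map_poly ratK2 q).[t1 * t2]).
Proof.
elim=> [b|p {}q _ hp _ hq]; first exact: inHH_binom_poly_t1t2.
suff -> : (map_poly ratK2 (p - q)).[t1 * t2]
          = (map_poly ratK2 p).[t1 * t2] - (map_poly ratK2 q).[t1 * t2] by apply: inHHB.
by rewrite raddfB hornerD hornerN.
Qed.

Lemma coproduct_inHH x : inH x -> forall p k, x = lev T p k -> inHH (Delta_rep p k).
Proof.
move=> [q [j [nq ->]]] p k Ex; have t1t2_neq0 := mulf_neq0 t1_neq0 t2_neq0.
rewrite /Delta_rep (levE ratK2) (leval_transfer _ (mulfV t1t2_neq0) (esym Ex)) /leval.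
exact/inHH_mulVX/inHH_horner_t1t2/numerical_binom_spanP.
Qed.

(** * H is the free binomial ring on a unit *)

Section FreeBinomialRing.
Variables (A : comAlgType rat) (R : A -> Prop) (r s : A).
Hypotheses (R_binomial : binomial_subring R) (Rr : R r) (Rs : R s) (rsK : r * s = 1).

Lemma horner_binom_poly_alg b : (map_poly (in_alg A) (binom_poly b)).[r] = binomA r b.
Proof. by rewrite horner_binom_poly /= mulr_algl. Qed.

Lemma R_horner q : binom_span q -> R ((map_poly (in_alg A) q).[r]).
Proof.
have [[_ RB _] Rbinom] := R_binomial.
elim=> [b|p {}q _ hp _ hq]; first by rewrite horner_binom_poly_alg; apply: Rbinom.
by rewrite rmorphB hornerD hornerN; apply: RB.
Qed.

Lemma R_leval p k : numerical p -> R (leval (in_alg A) r s p k).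
Proof.
have [[R1 _ RM] _] := R_binomial.
move=> /numerical_binom_spanP/R_horner Rp; apply: (RM _ _ Rp).
by elim: k => [|k IH]; [rewrite expr0 | rewrite exprS; apply: RM].
Qed.

(* The value does not depend on the chosen representative, by [leval_transfer]. *)
Definition lift_H (x : K1) : A :=
  let pk := epsilon (inhabits (0, 0%N))
    (fun pk : {poly rat} * nat => numerical pk.1 /\ x = lev T pk.1 pk.2) in
  leval (in_alg A) r s pk.1 pk.2.

Lemma lift_H_lev p k : numerical p -> lift_H (lev T p k) = leval (in_alg A) r s p k.
Proof.
move=> np; rewrite /lift_H; set P := fun pk : _ * _ => _.
have [_ /esym Ex] := epsilon_spec (inhabits (0, 0%N)) P (ex_intro P (p, k) (conj np erefl)).
exact: leval_transfer Ex.
Qed.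

Lemma lift_H_hom : ringhom_H_to R lift_H.
Proof.
split.
- by move=> _ [p [k [np ->]]]; rewrite lift_H_lev //; apply: R_leval.
- rewrite -levT1 lift_H_lev; last exact: numerical1.
  by rewrite /leval rmorph1 hornerC mulr1.
- move=> _ _ [p [k [np ->]]] [q [j [nq ->]]].
  rewrite levTD !lift_H_lev ?levalD //.
  by apply: numericalD; apply: numericalM => //; apply: numericalXn.
- move=> _ _ [p [k [np ->]]] [q [j [nq ->]]].
  by rewrite levTM !lift_H_lev ?levalM //; apply: numericalM.
Qed.

Lemma lift_HT : lift_H T = r.
Proof.
rewrite -levTX lift_H_lev; last exact: numericalX.
by rewrite /leval map_polyX hornerX mulr1.
Qed.
End FreeBinomialRing.

Section LiftUniqueness.
Variables (A : comAlgType rat) (R : A -> Prop) (r s : A) (psi : K1 -> A).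
Hypotheses (rsK : r * s = 1) (psi_hom : ringhom_H_to R psi) (psiT : psi T = r).

Lemma hom_psiB x y : inH x -> inH y -> psi (x - y) = psi x - psi y.
Proof.
case: psi_hom => _ _ psiD _ hx hy.
by apply/eqP; rewrite eq_sym subr_eq -psiD ?subrK //; apply: inHB.
Qed.

Lemma hom_psi_nat n : psi n%:R = n%:R.
Proof.
have [_ psi1 psiD _] := psi_hom.
elim: n => [|n IH]; first by rewrite !mulr0n -(subrr 1) hom_psiB ?subrr //; apply: inH1.
by rewrite -!natr1 psiD ?IH ?psi1 //; [apply: inH_nat | apply: inH1].
Qed.

Lemma hom_psiX x j : inH x -> psi (x ^+ j) = psi x ^+ j.
Proof.
have [_ psi1 _ psiM] := psi_hom.
by move=> hx; elim: j => [|j IH]; rewrite ?expr0 // !exprS psiM ?IH //; apply: inHX.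
Qed.

Lemma hom_psi_falling n : psi (falling T n) = falling r n.
Proof.
have [_ _ _ psiM] := psi_hom.
elim: n => [|n IH]; first by rewrite /falling !big_ord0; case: psi_hom.
rewrite /falling !big_ord_recr /= -!/(falling _ n) psiM.
- by rewrite IH hom_psiB ?psiT ?hom_psi_nat //; [apply: inHT | apply: inH_nat].
- exact: inH_falling inHT.
- exact: inHB inHT (inH_nat n).
Qed.

Lemma hom_psi_binom b : psi (binomK1 T b) = binomA r b.
Proof.
have [_ _ _ psiM] := psi_hom.
have fact_neq0 : (b`!%:R : rat) != 0 by rewrite pnatr_eq0 -lt0n fact_gt0.
have fact_neq0K1 : (b`!%:R : K1) != 0 by rewrite -(rmorph_nat ratK1) fmorph_eq0.
have : psi (b`!%:R * binomK1 T b) = falling r b.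
  by rewrite /binomK1 mulrC divfK // hom_psi_falling.
rewrite psiM ?hom_psi_nat; [|apply: inH_nat | apply/inH_binom/inHT].
by rewrite /binomA => <-; rewrite mulr_natl -scaler_nat scalerA mulVf ?scale1r.
Qed.

Lemma hom_psi_horner q :
  binom_span q -> psi ((map_poly ratK1 q).[T]) = (map_poly (in_alg A) q).[r].
Proof.
elim=> [b|p {}q sp hp sq hq].
  by rewrite horner_binom_poly_K1 horner_binom_poly_alg hom_psi_binom.
rewrite !rmorphB !hornerD !hornerN hom_psiB ?hp ?hq //.
  exact: inH_horner inHT sp.
exact: inH_horner inHT sq.
Qed.

Lemma hom_psiTV : psi T^-1 = s.
Proof.
have [_ psi1 _ psiM] := psi_hom.
have := psiM _ _ inHT inHTV; rewrite mulTV psi1 psiT => /(congr1 ( *%R s)).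
by rewrite mulr1 mulrA [s * r]mulrC rsK mul1r => <-.
Qed.

Lemma hom_psi_lev p k : numerical p -> psi (lev T p k) = leval (in_alg A) r s p k.
Proof.
have [_ _ _ psiM] := psi_hom.
move=> /numerical_binom_spanP sp; rewrite (levE ratK1) /leval psiM; last 2 first.
- exact: inH_horner inHT sp.
- exact/inHX/inHTV.
by rewrite hom_psiX ?hom_psiTV ?hom_psi_horner //; apply: inHTV.
Qed.
End LiftUniqueness.

Theorem theorem1p3 :
  ((forall x, inH x -> laurent x) /\
   subring inH /\
   (forall x, inH x -> forall p k, x = lev T p k -> inHH (Delta_rep p k)) /\
   (forall x, inH x -> forall p k, x = lev T p k ->
      exists z : int, counit_rep p k = z%:~R) /\
   (forall x, inH x -> forall p k, x = lev T p k -> inH (antipode_rep p k)))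
  /\
  ((subring inH /\ (forall r n, inH r -> inH (binomK1 r n))) /\
   inH T /\ (exists u, inH u /\ T * u = 1) /\
   (forall (A : comAlgType rat) (R : A -> Prop), binomial_subring R ->
    forall r : A, R r -> (exists s, R s /\ r * s = 1) ->
      (exists phi : K1 -> A, ringhom_H_to R phi /\ phi T = r) /\
      (forall phi psi : K1 -> A, ringhom_H_to R phi -> ringhom_H_to R psi ->
         phi T = r -> psi T = r -> forall x, inH x -> phi x = psi x))).
Proof.
split.
  do !split; [exact: inH_laurent | exact: inH1 | exact: inHB | exact: inHM
             | exact: coproduct_inHH | exact: counit_int | exact: antipode_inH].
split; first by split; [exact: subring_inH | move=> r n; exact: inH_binom].
split; first exact: inHT.
split; first by exists T^-1; split; [exact: inHTV | exact: mulTV].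
move=> A R R_binomial r Rr [s [Rs rsK]]; split.
  by exists (lift_H r s); split; [exact: lift_H_hom | exact: lift_HT].
move=> phi psi phi_hom psi_hom phiT psiT _ [p [k [np ->]]].
by rewrite (hom_psi_lev rsK phi_hom phiT _ np) (hom_psi_lev rsK psi_hom psiT _ np).
Qed.
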